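(* Let $n,m,d$ be positive integers with $n=dm$ and $\gcd(d,m)=1$, and let $r,t\in\mathbb{Z}$ with $\gcd(r,n)=1$. Then \[\kappa(n,r,t)=\frac{|r|_n\,\kappa(d,r,t)\,\kappa(m,r,t)}{\gcd\left(\kappa(d,r,t),|r|_n\right)\gcd\left(\kappa(m,r,t),|r|_n\right)}.\] In particular, $\kappa(d,r,t)$ divides $\kappa(n,r,t)$.
   Context: For an integer $m\geq1$ and an integer $r$ with $\gcd(r,m)=1$, $|r|_m$ denotes the multiplicative order of $r$ modulo $m$ (so $|r|_1=1$). For $k\geq1$, $S_k(x):=1+x+\cdots+x^{k-1}$, and $S_0(x):=0$. For integers $n\geq1$, $r,t$ with $\gcd(r,n)=1$, $\kappa(n,r,t):=\dfrac{n\,|r|_n}{\gcd\left(n,\ t\,S_{|r|_n}(r)\right)}$. *)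

From mathcomp Require Import all_boot all_order all_algebra.
Set Implicit Arguments. Unset Strict Implicit. Unset Printing Implicit Defensive.
Import Order.TTheory GRing.Theory Num.Theory.
Local Open Scope ring_scope.

Definition unit_pow (m : nat) (r : int) (k : nat) : bool :=
  (r ^+ k == 1 %[mod m%:Z])%Z.

(* |r|_m : the least k >= 1 with r^k = 1 (mod m).  For gcd(r,m)=1 this order
   divides totient m <= m, so searching k in 1..m finds it; the default value 0
   (no such k in 1..m) never arises under the coprimality hypothesis. *)
Definition mord (m : nat) (r : int) : nat :=
  head 0%N [seq k <- iota 1 m | unit_pow m r k].

Definition Ssum (k : nat) (x : int) : int := \sum_(i < k) x ^+ i.

Definition kappa (n : nat) (r t : int) : nat :=
  let o := mord n r in
  let g := absz (t * Ssum o r) in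
  ((n * o) %/ gcdn n g)%N.

From mathcomp Require Import all_boot all_order all_algebra ring.
From mathcomp Require Import cyclic.
Set Implicit Arguments. Unset Strict Implicit. Unset Printing Implicit Defensive.
Import Order.TTheory GRing.Theory Num.Theory.

(* Write a = |r|_N and addord N x = N / gcd(N, x), the order of x in Z/NZ, so
   that kappa(N, r, t) = a * addord N (t S_a(r)).  If r^o = 1 (mod N), then a | o
   and S_o(r) = (o/a) S_a(r) (mod N); the order of a multiple in a cyclic group
   then gives kappa(N, r, t) = addord N (t S_o(r)) * gcd(kappa(N, r, t), o).
   Taking o = |r|_n, which is admissible for N = d and N = m, together with
   addord n = addord d * addord m (Chinese remainder theorem) yields both claims. *)

Lemma head_filter_min (p : pred nat) (s : seq nat) k :
  sorted leq s -> k \in s -> p k ->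
  let h := head 0 [seq x <- s | p x] in
  [/\ h \in s, p h & forall j, j \in s -> p j -> h <= j].
Proof.
move=> s_sorted ks pk /=.
have : k \in [seq x <- s | p x] by rewrite mem_filter pk.
have mem_hts := mem_filter p ^~ s; have := sorted_filter leq_trans p s_sorted.
case: [seq x <- s | p x] mem_hts => // h t mem_hts hts_sorted _ /=.
have /andP[ph hs] : p h && (h \in s) by rewrite -mem_hts mem_head.
split=> // j js pj; have : j \in h :: t by rewrite mem_hts pj.
rewrite inE => /predU1P[-> // | jt].
exact: (allP (order_path_min leq_trans hts_sorted)).
Qed.

Lemma totient_leq n : totient n <= n.
Proof.
rewrite totient_count_coprime -[n in _ <= n]subn0 -[n - 0]muln1.
rewrite -sum_nat_const_nat; apply: leq_sum => i _; exact: leq_b1.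
Qed.

Lemma coprime_div_gcdn m n : 0 < m -> coprime (m %/ gcdn m n) (n %/ gcdn m n).
Proof.
move=> m_gt0; have g_gt0 : 0 < gcdn m n by rewrite gcdn_gt0 m_gt0.
rewrite /coprime -(eqn_pmul2r g_gt0) mul1n muln_gcdl.
by rewrite !divnK ?dvdn_gcdl ?dvdn_gcdr.
Qed.

Lemma gcdnM_coprime d m x : coprime d m -> gcdn (d * m) x = gcdn d x * gcdn m x.
Proof.
move=> cop_dm; set g := gcdn (d * m) x.
have -> : gcdn d x = gcdn g d by rewrite gcdnAC [gcdn (d * m) d]gcdnC gcdnMr.
have -> : gcdn m x = gcdn g m by rewrite gcdnAC [gcdn (d * m) m]gcdnC gcdnMl.
apply/eqP; rewrite eqn_dvd; apply/andP; split.
  rewrite muln_gcdl dvdn_gcd dvdn_mulr //= muln_gcdr dvdn_gcd dvdn_mull //.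
  exact: dvdn_gcdl.
rewrite Gauss_dvd ?dvdn_gcdl //.
exact: coprime_dvdl (dvdn_gcdr _ _) (coprime_dvdr (dvdn_gcdr _ _) cop_dm).
Qed.

Local Open Scope ring_scope.

Lemma unit_pow_addr N (x : int) a b :
  unit_pow N x a -> unit_pow N x (a + b) = unit_pow N x b.
Proof. by move=> /eqP ha; rewrite /unit_pow exprD -modzMml ha modzMml mul1r. Qed.

Lemma unit_pow_mulr N (x : int) a q : unit_pow N x a -> unit_pow N x (a * q).
Proof. by move=> /eqP ha; apply/eqP; rewrite exprM -modzXm ha modzXm expr1n. Qed.

Lemma unit_pow_dvd d N (x : int) k :
  (d %| N)%N -> unit_pow N x k -> unit_pow d x k.
Proof. by rewrite /unit_pow !eqz_mod_dvd => dN; apply: dvdz_trans. Qed.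

Lemma unit_pow_totient N (r : int) : (0 < N)%N -> coprimez r N ->
  unit_pow N r (totient N).
Proof.
move=> N_gt0 cop_rN; set a := `|(r %% N)%Z|%N.
have ra : (r %% N)%Z = a%:Z by rewrite /a gez0_abs // modz_ge0 // -lt0n.
have cop_aN : coprime a N by move: cop_rN; rewrite /coprimez -gcdz_modl ra.
apply/eqP; rewrite -modzXm ra -[a%:Z]natz -natrX natz modz_nat.
by rewrite -[1 in RHS]/(1%N%:Z) modz_nat Euler_exp_totient.
Qed.

Section MultiplicativeOrder.

Variables (N : nat) (r : int).
Hypotheses (N_gt0 : (0 < N)%N) (cop_rN : coprimez r N).

Let totient_in_range : totient N \in iota 1 N.
Proof. by rewrite mem_iota totient_gt0 N_gt0 add1n ltnS totient_leq. Qed.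

Let mord_head := head_filter_min (iota_sorted 1 N) totient_in_range
  (unit_pow_totient N_gt0 cop_rN).

Lemma mord_gt0 : (0 < mord N r)%N.
Proof. by have [+ _ _] := mord_head; rewrite mem_iota => /andP[]. Qed.

Lemma unit_pow_mord : unit_pow N r (mord N r).
Proof. by have [] := mord_head. Qed.

Lemma mord_min j : (0 < j)%N -> unit_pow N r j -> (mord N r <= j)%N.
Proof.
have [mord_in _ min_mord] := mord_head; move=> j_gt0 rj.
have mord_leN : (mord N r <= N)%N.
  by move: mord_in; rewrite mem_iota add1n ltnS => /andP[].
have [jN | /ltnW Nj] := leqP j N; last exact: leq_trans Nj.
by apply: min_mord; rewrite // mem_iota j_gt0 add1n.
Qed.

Lemma unit_powE k : unit_pow N r k = (mord N r %| k)%N.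
Proof.
apply/idP/idP => [rk | /dvdnP[q ->]]; last first.
  by rewrite mulnC unit_pow_mulr ?unit_pow_mord.
have : unit_pow N r (k %% mord N r).
  have r_pow_mul := unit_pow_mulr (k %/ mord N r) unit_pow_mord.
  by rewrite -(unit_pow_addr _ r_pow_mul) mulnC -divn_eq.
rewrite /dvdn; case: posnP => // rem_gt0 /(mord_min rem_gt0).
by rewrite leqNgt ltn_pmod ?mord_gt0.
Qed.

End MultiplicativeOrder.

Lemma SsumD k l (x : int) : Ssum (k + l) x = Ssum k x + x ^+ k * Ssum l x.
Proof.
rewrite /Ssum big_split_ord /= mulr_sumr; congr (_ + _).
by apply: eq_bigr => i _; rewrite exprD.
Qed.

Lemma Ssum_muln_mod N (x : int) a q : unit_pow N x a ->
  (Ssum (a * q) x == Ssum a x * q%:Z %[mod N])%Z.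
Proof.
move=> xa; rewrite eqz_mod_dvd; elim: q => [|q IHq].
  by rewrite muln0 /Ssum big_ord0 mulr0 subr0.
have -> : Ssum (a * q.+1) x - Ssum a x * q.+1%:Z =
    (Ssum (a * q) x - Ssum a x * q%:Z) + (x ^+ (a * q) - 1) * Ssum a x.
  by rewrite mulnS addnC SsumD -addn1 PoszD mulrDr mulr1; ring.
by rewrite rpredD // dvdz_mulr // -eqz_mod_dvd; apply: unit_pow_mulr.
Qed.

Definition addord (N : nat) (x : int) : nat := (N %/ gcdn N `|x|)%N.

Lemma addord_eq_mod (N : nat) (x y : int) :
  (x == y %[mod N])%Z -> addord N x = addord N y.
Proof.
move=> /eqP xy; rewrite /addord.
have gcdE z : gcdn N `|z| = `|gcdz N z|%N by [].
by rewrite !gcdE -gcdz_modr xy gcdz_modr.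
Qed.

Lemma addord_mulr N (x : int) k : (0 < N)%N ->
  addord N (x * k%:Z) = (addord N x %/ gcdn (addord N x) k)%N.
Proof.
move=> N_gt0; rewrite /addord abszM absz_nat.
have g_gt0 : (0 < gcdn N `|x|)%N by rewrite gcdn_gt0 N_gt0.
set g := gcdn N `|x|; set A := (N %/ g)%N.
have {1 2}-> : N = (A * g)%N by rewrite divnK ?dvdn_gcdl.
have {1}-> : `|x|%N = (`|x| %/ g * g)%N by rewrite divnK ?dvdn_gcdr.
rewrite -mulnA [(g * k)%N]mulnC mulnA -muln_gcdl Gauss_gcdr ?coprime_div_gcdn //.
by rewrite divnMr.
Qed.

Lemma addordM_coprime d m (x : int) : coprime d m ->
  addord (d * m) x = (addord d x * addord m x)%N.
Proof.
move=> cop_dm; rewrite /addord gcdnM_coprime // divnMA -divn_mulAC ?dvdn_gcdl //.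
by rewrite muln_divA ?dvdn_gcdl.
Qed.

Lemma kappaE N r t :
  kappa N r t = (mord N r * addord N (t * Ssum (mord N r) r))%N.
Proof. by rewrite /kappa /addord mulnC muln_divA ?dvdn_gcdl. Qed.

Lemma addord_Ssum_mul_gcd_kappa D r t o : (0 < D)%N -> coprimez r D ->
  unit_pow D r o ->
  (addord D (t * Ssum o r) * gcdn (kappa D r t) o)%N = kappa D r t.
Proof.
move=> D_gt0 cop_rD ro; set a := mord D r.
have /dvdnP[q oE] : (a %| o)%N by rewrite -unit_powE.
set A := addord D (t * Ssum a r).
have -> : addord D (t * Ssum o r) = (A %/ gcdn A q)%N.
  have /eqP Ssum_o := Ssum_muln_mod q (unit_pow_mord D_gt0 cop_rD).
  rewrite -addord_mulr // -mulrA; apply/addord_eq_mod/eqP.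
  by rewrite oE mulnC -modzMmr Ssum_o modzMmr.
rewrite kappaE -/a -/A oE [(q * a)%N]mulnC -muln_gcdr mulnCA.
by rewrite divnK ?dvdn_gcdl.
Qed.

Theorem lemma3p3 (n m d : nat) (r t : int) :
  (0 < n)%N -> (0 < m)%N -> (0 < d)%N -> n = (d * m)%N -> coprime d m ->
  coprimez r n%:Z ->
  (kappa n r t * (gcdn (kappa d r t) (mord n r) * gcdn (kappa m r t) (mord n r))
     = mord n r * kappa d r t * kappa m r t)%N
  /\ (kappa d r t %| kappa n r t)%N.
Proof.
move=> n_gt0 m_gt0 d_gt0 nE cop_dm cop_rn.
set o := mord n r; set c := t * Ssum o r.
have ro : unit_pow n r o by apply: unit_pow_mord.
have dn : (d %| n)%N by rewrite nE dvdn_mulr.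
have mn : (m %| n)%N by rewrite nE dvdn_mull.
have kappa_d := addord_Ssum_mul_gcd_kappa t d_gt0 (coprimez_dvdr dn cop_rn)
  (unit_pow_dvd dn ro).
have kappa_m := addord_Ssum_mul_gcd_kappa t m_gt0 (coprimez_dvdr mn cop_rn)
  (unit_pow_dvd mn ro).
have kappa_n : kappa n r t = (o * (addord d c * addord m c))%N.
  by rewrite kappaE -/o -/c nE addordM_coprime.
split; first by rewrite kappa_n -{2}kappa_d -{2}kappa_m; ring.
rewrite kappa_n -kappa_d mulnCA dvdn_mul //.
by rewrite dvdn_mulr ?dvdn_gcdr.
Qed.
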